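(* Let $D=\mathrm{diag}(1,-1,1,-1,\ldots)=(1,-x)$, let $R$ be a Riordan involution (respectively, a Riordan pseudo involution), and put $U=RD$ and $V=DR$. Then for each positive integer $n$: (a) the columns of $(U+D)^n$ (respectively, $(R+D)^n$) are $R$-invariant sequences of the first kind; (b) the columns of $(U-D)^n$ (respectively, $(R-D)^n$) are inverse $R$-invariant sequences of the first kind; (c) the columns of $(V^T+D)^n$ (respectively, $(R^T+D)^n$) are $R$-invariant sequences of the second kind; (d) the columns of $(V^T-D)^n$ (respectively, $(R^T-D)^n$) are inverse $R$-invariant sequences of the second kind.
   Context: All matrices are infinite, indexed by $0,1,2,\ldots$. A Riordan matrix $(g(x),f(x))$, with $g(x)=g_0+g_1x+\cdots$, $g_0\ne0$, and $f(x)=f_1x+\cdots$, $f_1\ne0$, is the infinite lower triangular matrix whose $j$-th column has generating function $g(x)f(x)^j$. A Riordan matrix $R$ is a Riordan involution if $R^2=I$ and a Riordan pseudo involution if $(RD)^2=I$. For a Riordan involution $R$, a vector $\mathbf x\in\mathbb{R}^\infty$ is an $R$-invariant sequence of the first kind if $R\mathbf x=\mathbf x$, an inverse $R$-invariant sequence of the first kind if $R\mathbf x=-\mathbf x$, an $R$-invariant sequence of the second kind if $R^T\mathbf x=\mathbf x$, and an inverse $R$-invariant sequence of the second kind if $R^T\mathbf x=-\mathbf x$. For a Riordan pseudo involution $R$, the same notions are defined with $R$ replaced by $RD$ (first kind) and $R^T$ replaced by $R^TD$ (second kind). *)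

From mathcomp Require Import all_boot all_order all_algebra.
Set Implicit Arguments. Unset Strict Implicit. Unset Printing Implicit Defensive.
Import Order.TTheory GRing.Theory Num.Theory.
Local Open Scope ring_scope.

Section Defs.
Variable R : realFieldType.

Definition fps := nat -> R.
Definition imat := nat -> nat -> R.
Definition ivec := nat -> R.

Definition fps_mul (a b : fps) : fps :=
  fun n => \sum_(k < n.+1) a k * b (n - k)%N.
Definition fps_one : fps := fun n => if n == 0%N then 1 else 0.
Fixpoint fps_pow (a : fps) (j : nat) : fps :=
  match j with 0%N => fps_one | j'.+1 => fps_mul a (fps_pow a j') end.

(* The Riordan matrix (g, f): column j has generating function g f^j *)
Definition riordan_mat (g f : fps) : imat := fun i j => fps_mul g (fps_pow f j) i.

Definition is_riordan (M : imat) : Prop :=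
  exists g f : fps, g 0%N != 0 /\ f 0%N = 0 /\ f 1%N != 0 /\
    forall i j, M i j = riordan_mat g f i j.

(* Matrix operations.  The product sums over k <= max i j; this is the exact
   (infinite) product whenever A is lower triangular or B is upper triangular,
   which covers every product used below. *)
Definition mmul (A B : imat) : imat :=
  fun i j => \sum_(k < (maxn i j).+1) A i k * B k j.
Definition madd (A B : imat) : imat := fun i j => A i j + B i j.
Definition msub (A B : imat) : imat := fun i j => A i j - B i j.
Definition mtr (A : imat) : imat := fun i j => A j i.
Definition mid : imat := fun i j => if i == j then 1 else 0.
Fixpoint mpow (A : imat) (n : nat) : imat :=
  match n with 0%N => mid | n'.+1 => mmul A (mpow A n') end.
Definition mcol (A : imat) (j : nat) : ivec := fun i => A i j.

Definition Dmat : imat := fun i j => if i == j then (-1) ^+ i else 0.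

Definition meq (A B : imat) : Prop := forall i j, A i j = B i j.

Definition riordan_involution (M : imat) : Prop :=
  is_riordan M /\ meq (mmul M M) mid.
Definition riordan_pseudo_involution (M : imat) : Prop :=
  is_riordan M /\ meq (mmul (mmul M Dmat) (mmul M Dmat)) mid.

(* A x for a lower triangular A (exact finite sum) *)
Definition mulv_low (A : imat) (x : ivec) : ivec :=
  fun i => \sum_(k < i.+1) A i k * x k.

Definition finsupp (x : ivec) (N : nat) : Prop := forall k, (N <= k)%N -> x k = 0.

(* A^T x for finitely supported x: (A^T x)_i = sum_k A k i x k *)
Definition mulTv_eq (A : imat) (x : ivec) (s : R) : Prop :=
  exists N, finsupp x N /\ forall i, \sum_(k < N) A k i * x k = s * x i.

(* Invariant sequences w.r.t. a lower-triangular matrix A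
   (A = R for an involution, A = R D for a pseudo involution). *)
Definition inv_seq_first (A : imat) (x : ivec) : Prop := forall i, mulv_low A x i = x i.
Definition inverse_inv_seq_first (A : imat) (x : ivec) : Prop :=
  forall i, mulv_low A x i = - x i.
(* second kind: B^T x = x, with B = R (involution) or B = D R, so B^T = R^T D
   (pseudo involution). *)
Definition inv_seq_second (B : imat) (x : ivec) : Prop := mulTv_eq B x 1.
Definition inverse_inv_seq_second (B : imat) (x : ivec) : Prop := mulTv_eq B x (-1).

End Defs.

From mathcomp Require Import all_boot all_algebra.
From Stdlib Require Import FunctionalExtensionality.
From mathcomp Require Import ring zify.
Import GRing.Theory.
Local Open Scope ring_scope.
Set Implicit Arguments.
Unset Strict Implicit.

(* Let B be the matrix whose invariant sequences are sought (R, resp. R D) and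
   Y = R D, resp. Y = R.  In both cases B Y = D and B D = Y, so left
   multiplication by B swaps Y and D: it fixes Y + D and negates Y - D, hence
   B (Y +- D)^n = +-(Y +- D)^n and every column of (Y +- D)^n is an
   eigenvector of B.  The second kind is the transposed statement, using
   D^T = D.  Every matrix involved is lower triangular, which is what makes
   the truncated product [mmul] associative. *)

Section LowerTriangular.
Variable K : realFieldType.
Implicit Types A B C X Z : imat K.

Definition lower_tri A := forall i j, (i < j)%N -> A i j = 0.
Definition mscale (s : K) A : imat K := fun i j => s * A i j.

Lemma meq_eq A B : meq A B -> A = B.
Proof.
by move=> eqAB; do 2![apply: functional_extensionality => ?]; exact: eqAB.
Qed.

Lemma big_ord_shrink (F : nat -> K) a N : (a <= N)%N ->
  (forall k, (a <= k)%N -> F k = 0) -> \sum_(k < N) F k = \sum_(k < a) F k.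
Proof.
move=> aN F0; rewrite (big_ord_widen N F aN) [RHS]big_mkcond /=.
by apply: eq_bigr => k _; case: ifPn => //; rewrite -leqNgt => /F0.
Qed.

Lemma big_ord_delta (F : nat -> K) N j : (j < N)%N ->
  \sum_(k < N) F k * (if (k : nat) == j then 1 else 0) = F j.
Proof.
move=> jN; transitivity (\sum_(k < N | (k : nat) == j) F k).
  by rewrite [RHS]big_mkcond; apply: eq_bigr => k _; case: eqP; rewrite ?mulr1 ?mulr0.
by rewrite big_ord1_eq jN.
Qed.

Lemma lower_tri_mmulE A i N : lower_tri A -> (i < N)%N ->
  forall B j, mmul A B i j = \sum_(k < N) A i k * B k j.
Proof.
move=> lA iN B j; set F := fun k => A i k * B k j.
have Fvanish k : (i.+1 <= k)%N -> F k = 0 by move=> ik; rewrite /F lA ?mul0r.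
have iij : (i.+1 <= (maxn i j).+1)%N by rewrite ltnS leq_maxl.
by rewrite /mmul (big_ord_shrink iij Fvanish) (big_ord_shrink iN Fvanish).
Qed.

Lemma lower_tri_mid : lower_tri (mid K).
Proof. by move=> i j ij; rewrite /mid ltn_eqF. Qed.

Lemma lower_tri_Dmat : lower_tri (Dmat K).
Proof. by move=> i j ij; rewrite /Dmat ltn_eqF. Qed.

Lemma lower_tri_madd A B : lower_tri A -> lower_tri B -> lower_tri (madd A B).
Proof. by move=> lA lB i j ij; rewrite /madd lA ?lB ?addr0. Qed.

Lemma lower_tri_msub A B : lower_tri A -> lower_tri B -> lower_tri (msub A B).
Proof. by move=> lA lB i j ij; rewrite /msub lA ?lB ?subr0. Qed.

Lemma lower_tri_mmul A B : lower_tri A -> lower_tri B -> lower_tri (mmul A B).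
Proof.
move=> lA lB i j ij; rewrite /mmul big1 // => k _.
case: (leqP k i) => [ki | ik]; last by rewrite lA ?mul0r.
by rewrite lB ?mulr0 // (leq_ltn_trans ki ij).
Qed.

Lemma lower_tri_mpow X n : lower_tri X -> lower_tri (mpow X n).
Proof.
by move=> lX; elim: n => [|n IH] /=; [exact: lower_tri_mid | exact: lower_tri_mmul].
Qed.

Lemma mmul1l A : mmul (mid K) A = A.
Proof.
apply: meq_eq => i j; rewrite /mmul -[RHS](@big_ord_delta (A^~ j) (maxn i j).+1 i).
  by apply: eq_bigr => k _; rewrite /mid mulrC eq_sym.
by rewrite ltnS leq_maxl.
Qed.

Lemma mmul1r A : mmul A (mid K) = A.
Proof. by apply: meq_eq => i j; rewrite /mmul big_ord_delta // ltnS leq_maxr. Qed.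

Lemma mmulA A B C : lower_tri A -> lower_tri B ->
  mmul (mmul A B) C = mmul A (mmul B C).
Proof.
move=> lA lB; apply: meq_eq => i j; set N := (maxn i j).+1.
have iN : (i < N)%N by rewrite ltnS leq_maxl.
rewrite [LHS]/mmul -/N [RHS](lower_tri_mmulE lA iN).
under eq_bigr => k _ do rewrite (lower_tri_mmulE lA iN) mulr_suml.
rewrite exchange_big /=; apply: eq_bigr => l _.
rewrite (lower_tri_mmulE lB (ltn_ord l)) mulr_sumr.
by apply: eq_bigr => k _; rewrite mulrA.
Qed.

Lemma mmulDl A B C : mmul (madd A B) C = madd (mmul A C) (mmul B C).
Proof.
by apply: meq_eq => i j; rewrite /mmul /madd -big_split; apply: eq_bigr => k _; rewrite mulrDl.
Qed.

Lemma mmulDr A B C : mmul A (madd B C) = madd (mmul A B) (mmul A C).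
Proof.
by apply: meq_eq => i j; rewrite /mmul /madd -big_split; apply: eq_bigr => k _; rewrite mulrDr.
Qed.

Lemma mmulBl A B C : mmul (msub A B) C = msub (mmul A C) (mmul B C).
Proof.
by apply: meq_eq => i j; rewrite /mmul /msub -sumrB; apply: eq_bigr => k _; rewrite mulrBl.
Qed.

Lemma mmulBr A B C : mmul A (msub B C) = msub (mmul A B) (mmul A C).
Proof.
by apply: meq_eq => i j; rewrite /mmul /msub -sumrB; apply: eq_bigr => k _; rewrite mulrBr.
Qed.

Lemma mmulZl s A B : mmul (mscale s A) B = mscale s (mmul A B).
Proof.
by apply: meq_eq => i j; rewrite /mmul /mscale mulr_sumr; apply: eq_bigr => k _; rewrite mulrA.
Qed.

Lemma mmulZr s A B : mmul A (mscale s B) = mscale s (mmul A B).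
Proof.
by apply: meq_eq => i j; rewrite /mmul /mscale mulr_sumr; apply: eq_bigr => k _; rewrite mulrCA.
Qed.

Lemma mpowSr X n : lower_tri X -> mpow X n.+1 = mmul (mpow X n) X.
Proof.
move=> lX; elim: n => [|n IH]; first by rewrite /= mmul1l mmul1r.
rewrite [LHS]/(mpow X n.+2) -/(mpow X n.+1) [in LHS]IH -mmulA //.
exact: lower_tri_mpow.
Qed.

Lemma mtr_mmul A B : mtr (mmul A B) = mmul (mtr B) (mtr A).
Proof.
by apply: meq_eq => i j; rewrite /mtr /mmul maxnC; apply: eq_bigr => k _; rewrite mulrC.
Qed.

Lemma mtr_mpow X n : lower_tri X -> mtr (mpow X n) = mpow (mtr X) n.
Proof.
move=> lX; elim: n => [|n IH]; first by apply: meq_eq => i j; rewrite /mtr /= /mid eq_sym.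
by rewrite mpowSr // mtr_mmul IH.
Qed.

Lemma mtr_madd A B : mtr (madd A B) = madd (mtr A) (mtr B).
Proof. by []. Qed.

Lemma mtr_msub A B : mtr (msub A B) = msub (mtr A) (mtr B).
Proof. by []. Qed.

Lemma mtr_Dmat : mtr (Dmat K) = Dmat K.
Proof. by apply: meq_eq => i j; rewrite /mtr /Dmat eq_sym; case: eqP => [->|]. Qed.

Lemma mmul_Dmat_Dmat : mmul (Dmat K) (Dmat K) = mid K.
Proof.
apply: meq_eq => i j; set F := fun k => (-1) ^+ i * Dmat K k j.
rewrite /mmul (eq_bigr (fun k : 'I__ => F k * (if (k : nat) == i then 1 else 0))).
  rewrite big_ord_delta ?ltnS ?leq_maxl // /F /Dmat /mid.
  by case: eqP => [->|]; rewrite ?mulr0 // -exprMn mulrNN mulr1 expr1n.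
move=> k _; rewrite /F /Dmat [(k : nat) == i]eq_sym.
by case: eqP => [<-|]; rewrite ?mulr1 ?mulr0 ?mul0r.
Qed.

Lemma mulv_low_mpow_col B X s n j : lower_tri B -> lower_tri X ->
  mmul B X = mscale s X -> (0 < n)%N ->
  forall i, mulv_low B (mcol (mpow X n) j) i = s * mcol (mpow X n) j i.
Proof.
move=> lB lX BX; case: n => // n _ i.
by rewrite /mulv_low -(lower_tri_mmulE lB (ltnSn i)) /= -mmulA // BX mmulZl.
Qed.

Lemma mulTv_mpow_col B Z s n j : lower_tri B -> lower_tri Z ->
  mmul Z B = mscale s Z -> (0 < n)%N -> mulTv_eq B (mcol (mpow (mtr Z) n) j) s.
Proof.
move=> lB lZ ZB n_gt0; have lZn := lower_tri_mpow n lZ.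
rewrite /mcol -mtr_mpow //; exists j.+1; split=> [k jk | i]; first exact: lZn.
have -> : \sum_(k < j.+1) B k i * mtr (mpow Z n) k j = mmul (mpow Z n) B j i.
  by rewrite (lower_tri_mmulE lZn (ltnSn j)); apply: eq_bigr => k _; rewrite mulrC.
case: n n_gt0 lZn => // n _ _.
rewrite mpowSr // mmulA ?ZB ?mmulZr //; exact: lower_tri_mpow.
Qed.

Section Swap.
Variables B Y C : imat K.
Hypotheses (lB : lower_tri B) (lY : lower_tri Y) (lC : lower_tri C).

Lemma inv_seq_first_of_swap n j : mmul B Y = C -> mmul B C = Y -> (0 < n)%N ->
  inv_seq_first B (mcol (mpow (madd Y C) n) j) /\
  inverse_inv_seq_first B (mcol (mpow (msub Y C) n) j).
Proof.
move=> BY BC n_gt0.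
have fixed : mmul B (madd Y C) = mscale 1 (madd Y C).
  by apply: meq_eq => a b; rewrite mmulDr BY BC /madd /mscale; ring.
have negated : mmul B (msub Y C) = mscale (-1) (msub Y C).
  by apply: meq_eq => a b; rewrite mmulBr BY BC /msub /mscale; ring.
split=> i.
- by rewrite (mulv_low_mpow_col j lB (lower_tri_madd lY lC) fixed n_gt0) mul1r.
- by rewrite (mulv_low_mpow_col j lB (lower_tri_msub lY lC) negated n_gt0) mulN1r.
Qed.

Lemma inv_seq_second_of_swap n j : mtr C = C -> mmul Y B = C -> mmul C B = Y ->
  (0 < n)%N ->
  inv_seq_second B (mcol (mpow (madd (mtr Y) C) n) j) /\
  inverse_inv_seq_second B (mcol (mpow (msub (mtr Y) C) n) j).
Proof.
move=> trC YB CB n_gt0.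
have fixed : mmul (madd Y C) B = mscale 1 (madd Y C).
  by apply: meq_eq => a b; rewrite mmulDl YB CB /madd /mscale; ring.
have negated : mmul (msub Y C) B = mscale (-1) (msub Y C).
  by apply: meq_eq => a b; rewrite mmulBl YB CB /msub /mscale; ring.
rewrite -{1 2}trC -mtr_madd -mtr_msub; split.
- exact: (mulTv_mpow_col j lB (lower_tri_madd lY lC) fixed n_gt0).
- exact: (mulTv_mpow_col j lB (lower_tri_msub lY lC) negated n_gt0).
Qed.

End Swap.

Lemma fps_pow_lt (f : fps K) j k : f 0%N = 0 -> (k < j)%N -> fps_pow f j k = 0.
Proof.
move=> f0; elim: j k => // j IH k kj /=; rewrite /fps_mul big1 // => -[[|l] lk] _ /=.
  by rewrite f0 mul0r.
by rewrite IH ?mulr0 //; lia.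
Qed.

Lemma riordan_lower_tri M : is_riordan M -> lower_tri M.
Proof.
case=> g [f [_ [f0 [_ eqM]]]] i j ij; rewrite eqM /riordan_mat /fps_mul big1 // => k _.
by rewrite fps_pow_lt ?mulr0 //; have := ltn_ord k; lia.
Qed.

End LowerTriangular.

Theorem lemma5p1 (K : realFieldType) (M : imat K) :
  (riordan_involution M ->
    forall n : nat, (0 < n)%N -> forall j : nat,
      let U := mmul M (Dmat K) in
      let V := mmul (Dmat K) M in
      inv_seq_first M (mcol (mpow (madd U (Dmat K)) n) j) /\
      inverse_inv_seq_first M (mcol (mpow (msub U (Dmat K)) n) j) /\
      inv_seq_second M (mcol (mpow (madd (mtr V) (Dmat K)) n) j) /\
      inverse_inv_seq_second M (mcol (mpow (msub (mtr V) (Dmat K)) n) j)) /\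
  (riordan_pseudo_involution M ->
    forall n : nat, (0 < n)%N -> forall j : nat,
      inv_seq_first (mmul M (Dmat K)) (mcol (mpow (madd M (Dmat K)) n) j) /\
      inverse_inv_seq_first (mmul M (Dmat K)) (mcol (mpow (msub M (Dmat K)) n) j) /\
      inv_seq_second (mmul (Dmat K) M) (mcol (mpow (madd (mtr M) (Dmat K)) n) j) /\
      inverse_inv_seq_second (mmul (Dmat K) M) (mcol (mpow (msub (mtr M) (Dmat K)) n) j)).
Proof.
set D := Dmat K; have lD : lower_tri D := lower_tri_Dmat K.
split=> -[/riordan_lower_tri lM /meq_eq invM] n n_gt0 j.
- have lMD := lower_tri_mmul lM lD; have lDM := lower_tri_mmul lD lM.
  have M_MD : mmul M (mmul M D) = D by rewrite -mmulA // invM mmul1l.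
  have DM_M : mmul (mmul D M) M = D by rewrite mmulA // invM mmul1r.
  have [] := inv_seq_first_of_swap lM lMD lD j M_MD erefl n_gt0.
  by have [] := inv_seq_second_of_swap lM lDM lD j (mtr_Dmat K) DM_M erefl n_gt0.
- have lMD := lower_tri_mmul lM lD; have lDM := lower_tri_mmul lD lM.
  have MD_D : mmul (mmul M D) D = M by rewrite mmulA // mmul_Dmat_Dmat mmul1r.
  have D_DM : mmul D (mmul D M) = M by rewrite -mmulA // mmul_Dmat_Dmat mmul1l.
  have MDM : mmul (mmul M D) M = D by rewrite -{2}MD_D -mmulA // invM mmul1l.
  have M_DM : mmul M (mmul D M) = D by rewrite -mmulA.
  have [] := inv_seq_first_of_swap lMD lM lD j MDM MD_D n_gt0.
  by have [] := inv_seq_second_of_swap lDM lM lD j (mtr_Dmat K) M_DM D_DM n_gt0.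
Qed.
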